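(* Let $S$ be an idempotent semiring. Then $S$ satisfies the identity $x+xy+x\approx x$ if and only if $S$ satisfies $x+xyx+x\approx x$ and $\mathcal{R}^{\bullet}\subseteq\mathcal{D}^{+}$.
   Context: An idempotent semiring is an algebra $(S,+,\cdot)$ with two binary operations such that $(S,+)$ and $(S,\cdot)$ are bands (associative, with $x+x=x$ and $xx=x$), and both distributive laws $x(y+z)=xy+xz$ and $(x+y)z=xz+yz$ hold; addition is not assumed commutative. Green's relations: $a\,\mathcal{R}^{\bullet}\,b$ iff $ab=b$ and $ba=a$; $a\,\mathcal{D}^{+}\,b$ iff $a+b+a=a$ and $b+a+b=b$. *)

Record idem_semiring : Type := IdemSemiring {
  carrier :> Type;
  add : carrier -> carrier -> carrier;
  mul : carrier -> carrier -> carrier;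
  add_assoc : forall x y z, add x (add y z) = add (add x y) z;
  add_idem : forall x, add x x = x;
  mul_assoc : forall x y z, mul x (mul y z) = mul (mul x y) z;
  mul_idem : forall x, mul x x = x;
  mul_add_distr_l : forall x y z, mul x (add y z) = add (mul x y) (mul x z);
  mul_add_distr_r : forall x y z, mul (add x y) z = add (mul x z) (mul y z)
}.

Arguments add {i} _ _.
Arguments mul {i} _ _.

(* Green's relation R for the multiplicative reduct: a R b iff ab = b and ba = a *)
Definition R_mul {S : idem_semiring} (a b : S) : Prop :=
  mul a b = b /\ mul b a = a.

(* Green's relation D for the additive reduct: a D b iff a+b+a = a and b+a+b = b *)
Definition D_add {S : idem_semiring} (a b : S) : Prop :=
  add (add a b) a = a /\ add (add b a) b = b.


(* For the converse, put b := x + xy + x.  Multiplicative idempotence gives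
   x b = b, and the identity x + xyx + x = x is exactly b x = x; so x R b,
   hence x D b, i.e. x + b + x = x, and x + b + x collapses to b in the
   additive band. *)

Section IdemSemiring.

Variable S : idem_semiring.

Lemma add_sandwich_absorb (x z : S) :
  add (add x (add (add x z) x)) x = add (add x z) x.
Proof.
  rewrite !add_assoc, add_idem, <- (add_assoc S _ x x), add_idem.
  reflexivity.
Qed.

Lemma mul_l_sandwich (x y : S) :
  mul x (add (add x (mul x y)) x) = add (add x (mul x y)) x.
Proof.
  rewrite !mul_add_distr_l, mul_idem, mul_assoc, mul_idem. reflexivity.
Qed.

Lemma mul_r_sandwich (x y : S) :
  mul (add (add x (mul x y)) x) x = add (add x (mul (mul x y) x)) x.
Proof. rewrite !mul_add_distr_r, mul_idem. reflexivity. Qed.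

Section LeftAbsorption.

Hypothesis add_mul_absorb : forall x y : S, add (add x (mul x y)) x = x.

Lemma add_mul_sandwich_absorb (x y : S) :
  add (add x (mul (mul x y) x)) x = x.
Proof. rewrite <- mul_assoc. apply add_mul_absorb. Qed.

Lemma R_mul_D_add (a b : S) : R_mul a b -> D_add a b.
Proof.
  intros [Hab Hba]. split.
  - rewrite <- Hab. apply add_mul_absorb.
  - rewrite <- Hba. apply add_mul_absorb.
Qed.

End LeftAbsorption.

Lemma R_mul_sandwich (x y : S) :
  add (add x (mul (mul x y) x)) x = x ->
  R_mul x (add (add x (mul x y)) x).
Proof.
  intros Hxyx. split.
  - apply mul_l_sandwich.
  - rewrite mul_r_sandwich. exact Hxyx.
Qed.

End IdemSemiring.

Theorem lemma3p2 (S : idem_semiring) :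
  (forall x y : S, add (add x (mul x y)) x = x) <->
  ((forall x y : S, add (add x (mul (mul x y) x)) x = x) /\
   (forall a b : S, R_mul a b -> D_add a b)).
Proof.
  split.
  - intros Habs. split.
    + exact (add_mul_sandwich_absorb S Habs).
    + exact (R_mul_D_add S Habs).
  - intros [Hxyx HRD] x y.
    destruct (HRD _ _ (R_mul_sandwich S x y (Hxyx x y))) as [HD _].
    rewrite <- add_sandwich_absorb. exact HD.
Qed.
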